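(* Let $\mathcal{T}\in\mathbb{K}^{R\times R\times K}$ be slice mix invertible. Then for every nonzero $\boldsymbol{\lambda}\in\mathbb{K}^K$, $\mathrm{am}(\mathrm{span}(\boldsymbol{\lambda}))\geq\mathrm{gm}(\mathrm{span}(\boldsymbol{\lambda}))$. In particular, if $(\mathrm{span}(\boldsymbol{\lambda}),\mathbf{x})$ is a JGE pair of $\mathcal{T}$, then there is an integer $m>0$ with $p_{\mathcal{T}}(\boldsymbol{\gamma})=(\lambda_1\gamma_1+\cdots+\lambda_K\gamma_K)^m g(\boldsymbol{\gamma})$ for some nonzero polynomial $g$. Furthermore, if $\mathcal{T}$ has border $\mathbb{K}$-rank $R$, then $p_{\mathcal{T}}$ factors as a product of $R$ linear forms in $\boldsymbol{\gamma}$, so $\mathcal{T}$ has $R$ JGE values counting algebraic multiplicity.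
   Context: $\mathbb{K}$ denotes $\mathbb{R}$ or $\mathbb{C}$. For $\mathcal{T}\in\mathbb{K}^{R\times R\times K}$ with slices $\mathbf{T}_k=\mathcal{T}(:,:,k)$: slice mix invertible means some linear combination of the $\mathbf{T}_k$ is invertible. A nonzero $\mathbf{x}$ is a JGE vector if there are $\boldsymbol{\lambda}\in\mathbb{K}^K$ and nonzero $\mathbf{y}$ with $\mathbf{T}_\ell\mathbf{x}=\lambda_\ell\mathbf{y}$ for all $\ell$; $\mathrm{span}(\boldsymbol{\lambda})$ is a JGE value, $(\mathrm{span}(\boldsymbol{\lambda}),\mathbf{x})$ a JGE pair. $p_{\mathcal{T}}(\boldsymbol{\gamma})=\det(\sum_{k=1}^K\gamma_k\mathbf{T}_k)$. $\mathrm{am}(\mathrm{span}(\boldsymbol{\lambda}))$ is the largest $m$ such that $(\sum_k\lambda_k\gamma_k)^m$ divides $p_{\mathcal{T}}$; $\mathrm{gm}(\mathrm{span}(\boldsymbol{\lambda}))$ is the dimension of the span of all $\mathbf{x}$ with $(\mathrm{span}(\boldsymbol{\lambda}),\mathbf{x})$ a JGE pair. The border $\mathbb{K}$-rank of a tensor is the least $R$ such that it is a limit of tensors of $\mathbb{K}$-rank at most $R$ ($\mathbb{K}$-rank: least number of rank one tensors with $\mathbb{K}$-factors summing to it). *)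

From HB Require Import structures.
From mathcomp Require Import all_boot all_order all_algebra.
From mathcomp Require Import boolp Rstruct complex mpoly.
Set Implicit Arguments. Unset Strict Implicit. Unset Printing Implicit Defensive.
Import GRing.Theory Num.Theory.
Local Open Scope ring_scope.

Definition KR (b : bool) : numFieldType :=
  if b then (Rdefinitions.R : numFieldType)
  else (complex Rdefinitions.R : numFieldType).

Section Tensors.
Variables (F : numFieldType) (n K : nat).

(* A tensor T in F^{n x n x K} is given by its slices T k = T(:,:,k),
   so T(i,j,k) = T k i j. *)
Definition tensor := 'I_K -> 'M[F]_n.

Definition slice_mix_invertible (T : tensor) : Prop :=
  exists gam : 'I_K -> F, (\sum_k gam k *: T k) \in unitmx.

Definition jge_rel (T : tensor) (lam : 'rV[F]_K) (x : 'cV[F]_n) : Prop :=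
  x != 0 /\ exists y : 'cV[F]_n, y != 0 /\ forall l, T l *m x = lam 0 l *: y.

Definition jge_pair (T : tensor) (lam : 'rV[F]_K) (x : 'cV[F]_n) : Prop :=
  exists mu : 'rV[F]_K, (mu == lam)%MS /\ jge_rel T mu x.

Definition jge_value (T : tensor) (lam : 'rV[F]_K) : Prop :=
  exists x, jge_pair T lam x.

Definition pT (T : tensor) : {mpoly F[K]} :=
  \det (\matrix_(i < n, j < n) \sum_(k < K) 'X_k * (T k i j)%:MP).

Definition lform (lam : 'rV[F]_K) : {mpoly F[K]} :=
  \sum_(k < K) (lam 0 k)%:MP * 'X_k.

(* algebraic multiplicity: largest m with lform(lam)^m | p_T
   (the degree bound msize (pT T) is harmless when pT T != 0) *)
Definition am (T : tensor) (lam : 'rV[F]_K) : nat :=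
  \max_(m < (msize (pT T)).+1 |
          `[< exists q : {mpoly F[K]}, pT T = lform lam ^+ m * q >]) m.

(* geometric multiplicity: dimension of the span of all x such that
   (span(lam), x) is a JGE pair, i.e. the largest number of linearly
   independent such x *)
Definition gm (T : tensor) (lam : 'rV[F]_K) : nat :=
  \max_(d < n.+1 |
          `[< exists X : 'M[F]_(n, d),
                \rank X = d /\ forall j, jge_pair T lam (col j X) >]) d.

Definition rank_le (T : tensor) (r : nat) : Prop :=
  exists (a b : 'I_r -> 'I_n -> F) (c : 'I_r -> 'I_K -> F),
    forall k i j, T k i j = \sum_(s < r) a s i * b s j * c s k.

Definition tensor_cvg (S : nat -> tensor) (T : tensor) : Prop :=
  forall eps : F, 0 < eps -> exists N : nat, forall m : nat, (N <= m)%N ->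
    forall k i j, `|S m k i j - T k i j| < eps.

Definition border_rank_le (T : tensor) (r : nat) : Prop :=
  exists S : nat -> tensor, (forall m, rank_le (S m) r) /\ tensor_cvg S T.

Definition border_rank_eq (T : tensor) (r : nat) : Prop :=
  border_rank_le T r /\ forall r', (r' < r)%N -> ~ border_rank_le T r'.

End Tensors.

(* A JGE pair (span lam, x) gives T_l x = lam_l y for all l.  Multiplying the
   pencil sum_k gamma_k T_k by an invertible matrix whose first d columns span d
   independent such vectors makes these d columns multiples of the linear form
   lam . gamma, so (lam . gamma)^d divides p_T = det (sum_k gamma_k T_k), which is
   nonzero for a slice mix invertible T.  This gives am >= gm, and d = 1 gives the
   factorization attached to a single JGE pair.

   A tensor of rank at most R with an invertible slice mix has slices
   T_k = A diag(c_k) B with A, B invertible; hence p_T is a constant times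
   prod_s (c_s . gamma) and the columns of B^-1 are JGE vectors for the c_s.  For
   border rank R, apply this to approximating tensors, scale every c_s and every
   vector so that its largest entry is 1, and extract convergent subsequences by
   Bolzano-Weierstrass: the limits are nonzero, still satisfy the JGE equations,
   and comparing one nonvanishing coefficient shows that p_T is a constant
   multiple of the limiting product of linear forms. *)

From HB Require Import structures.
From mathcomp Require Import all_boot all_order all_algebra.
From mathcomp Require Import boolp Rstruct complex mpoly.
From mathcomp Require Import ring lra zify.
From Stdlib Require Import Rtopology.
Import Order.TTheory GRing.Theory Num.Theory.
Set Implicit Arguments. Unset Strict Implicit. Unset Printing Implicit Defensive.
Local Open Scope ring_scope.

Section SeqCvg.
Variable F : numFieldType.
Implicit Types (u v : nat -> F) (l m : F).

Definition seq_cvg u l :=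
  forall eps : F, 0 < eps -> exists N, forall t, (N <= t)%N -> `|u t - l| < eps.

Lemma seq_cvg_ext u v l : u =1 v -> seq_cvg u l -> seq_cvg v l.
Proof. by move=> uv h e /h[N hN]; exists N => t /hN; rewrite uv. Qed.

Lemma seq_cvg_cst l : seq_cvg (fun=> l) l.
Proof. by move=> e e0; exists 0%N => t _; rewrite subrr normr0. Qed.

Lemma seq_cvgD u v l m :
  seq_cvg u l -> seq_cvg v m -> seq_cvg (fun t => u t + v t) (l + m).
Proof.
move=> hu hv e e0; have e2 : 0 < e / 2 by rewrite divr_gt0.
have [N1 h1] := hu _ e2; have [N2 h2] := hv _ e2.
exists (maxn N1 N2) => t; rewrite geq_max => /andP[t1 t2].
rewrite opprD addrACA (splitr e); apply: le_lt_trans (ler_normD _ _) _.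
exact: ltrD (h1 t t1) (h2 t t2).
Qed.

Lemma seq_cvg0P u l : seq_cvg u l <-> seq_cvg (fun t => u t - l) 0.
Proof. by split=> h e /h[N hN]; exists N => t /hN; rewrite subr0. Qed.

Lemma seq_cvg0M u v : seq_cvg u 0 -> seq_cvg v 0 -> seq_cvg (fun t => u t * v t) 0.
Proof.
move=> hu hv e e0; have [N1 h1] := hu _ ltr01; have [N2 h2] := hv _ e0.
exists (maxn N1 N2) => t; rewrite geq_max => /andP[/h1 u1 /h2 v1].
rewrite !subr0 in u1 v1 *; rewrite normrM -[e]mul1r.
exact: ltr_pM (normr_ge0 _) (normr_ge0 _) u1 v1.
Qed.

Lemma seq_cvg0Ml c u : seq_cvg u 0 -> seq_cvg (fun t => c * u t) 0.
Proof.
move=> hu e e0; have c1 : 0 < `|c| + 1 by rewrite ltr_wpDl.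
have [N hN] := hu _ (divr_gt0 e0 c1); exists N => t /hN.
rewrite !subr0 normrM ltr_pdivlMr // mulrC => lt_ue.
apply: le_lt_trans lt_ue; apply: ler_wpM2r => //; by rewrite lerDl.
Qed.

Lemma seq_cvgM u v l m :
  seq_cvg u l -> seq_cvg v m -> seq_cvg (fun t => u t * v t) (l * m).
Proof.
move=> /seq_cvg0P hu /seq_cvg0P hv; apply/seq_cvg0P.
have := seq_cvgD (seq_cvg0M hu hv) (seq_cvgD (seq_cvg0Ml l hv) (seq_cvg0Ml m hu)).
by rewrite !addr0; apply: seq_cvg_ext => t; ring.
Qed.

Lemma seq_cvg_uniq u l m : seq_cvg u l -> seq_cvg u m -> l = m.
Proof.
move=> hl hm; apply/eqP; rewrite -subr_eq0; apply: contraT => lm.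
have e0 : 0 < `|l - m| / 2 by rewrite divr_gt0 // normr_gt0.
have [N1 h1] := hl _ e0; have [N2 h2] := hm _ e0; set t := maxn N1 N2.
have : `|l - m| < `|l - m| / 2 + `|l - m| / 2.
  apply: le_lt_trans (ler_distD (u t) _ _) _; rewrite distrC.
  exact: ltrD (h1 t (leq_maxl _ _)) (h2 t (leq_maxr _ _)).
by rewrite -splitr ltxx.
Qed.

Lemma homo_ltn_geq (phi : nat -> nat) : {homo phi : i j / (i < j)%N} ->
  forall t, (t <= phi t)%N.
Proof. by move=> inc; elim=> // t ih; exact: leq_ltn_trans ih (inc _ _ (ltnSn t)). Qed.

Lemma seq_cvg_subseq (phi : nat -> nat) u l : {homo phi : i j / (i < j)%N} ->
  seq_cvg u l -> seq_cvg (fun t => u (phi t)) l.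
Proof.
move=> inc h e /h[N hN]; exists N => t ht; apply: hN.
exact: leq_trans ht (homo_ltn_geq inc t).
Qed.

Lemma seq_cvg_neq0 u l : l != 0 -> seq_cvg u l ->
  exists N, forall t, (N <= t)%N -> u t != 0.
Proof.
move=> l0 /(_ `|l|); rewrite normr_gt0 => /(_ l0)[N hN]; exists N => t /hN.
by apply: contraTneq => ->; rewrite sub0r normrN ltxx.
Qed.

End SeqCvg.

Lemma eventually_forall_fin (I : finType) (P : I -> nat -> Prop) :
  (forall i, exists N, forall t, (N <= t)%N -> P i t) ->
  exists N, forall i t, (N <= t)%N -> P i t.
Proof.
move=> /choice[f hf]; exists (\max_i f i) => i t ht.
by apply: hf; apply: leq_trans ht; apply: leq_bigmax.
Qed.

Section LimitSum.
Variables (V : nmodType) (lim : (nat -> V) -> V -> Prop).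
Hypothesis lim_ext : forall u v l, u =1 v -> lim u l -> lim v l.
Hypothesis lim_cst : forall l, lim (fun=> l) l.
Hypothesis limD : forall u v l m, lim u l -> lim v m -> lim (fun t => u t + v t) (l + m).

Lemma lim_sum (I : Type) (r : seq I) (P : pred I) (u : I -> nat -> V) (l : I -> V) :
  (forall i, P i -> lim (u i) (l i)) ->
  lim (fun t => \sum_(i <- r | P i) u i t) (\sum_(i <- r | P i) l i).
Proof.
move=> h; elim: r => [|i r ih].
  by rewrite big_nil; apply: lim_ext (lim_cst 0) => t; rewrite big_nil.
rewrite big_cons; case: ifP => Pi.
  by apply: lim_ext (limD (h i Pi) ih) => t; rewrite big_cons Pi.
by apply: lim_ext ih => t; rewrite big_cons Pi.
Qed.

End LimitSum.

Section LimitDet.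
Variables (R : pzRingType) (lim : (nat -> R) -> R -> Prop).
Hypothesis lim_ext : forall u v l, u =1 v -> lim u l -> lim v l.
Hypothesis lim_cst : forall l, lim (fun=> l) l.
Hypothesis limD : forall u v l m, lim u l -> lim v m -> lim (fun t => u t + v t) (l + m).
Hypothesis limM : forall u v l m, lim u l -> lim v m -> lim (fun t => u t * v t) (l * m).

Lemma lim_prod (I : Type) (r : seq I) (P : pred I) (u : I -> nat -> R) (l : I -> R) :
  (forall i, P i -> lim (u i) (l i)) ->
  lim (fun t => \prod_(i <- r | P i) u i t) (\prod_(i <- r | P i) l i).
Proof.
move=> h; elim: r => [|i r ih].
  by rewrite big_nil; apply: lim_ext (lim_cst 1) => t; rewrite big_nil.
rewrite big_cons; case: ifP => Pi.
  by apply: lim_ext (limM (h i Pi) ih) => t; rewrite big_cons Pi.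
by apply: lim_ext ih => t; rewrite big_cons Pi.
Qed.

Lemma lim_det n (A : nat -> 'M[R]_n) (L : 'M[R]_n) :
  (forall i j, lim (fun t => A t i j) (L i j)) -> lim (fun t => \det (A t)) (\det L).
Proof.
move=> h; rewrite /determinant.
have := @lim_sum _ lim lim_ext lim_cst limD; apply=> s _.
apply: limM; first exact: lim_cst.
by apply: lim_prod => i _; apply: h.
Qed.

End LimitDet.

Lemma seq_cvg_sum (F : numFieldType) (I : Type) (r : seq I) (P : pred I)
    (u : I -> nat -> F) (l : I -> F) :
  (forall i, P i -> seq_cvg (u i) (l i)) ->
  seq_cvg (fun t => \sum_(i <- r | P i) u i t) (\sum_(i <- r | P i) l i).
Proof. by have := lim_sum (@seq_cvg_ext F) (@seq_cvg_cst F) (@seq_cvgD F); apply. Qed.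

Lemma seq_cvg_det (F : numFieldType) n (A : nat -> 'M[F]_n) (L : 'M[F]_n) :
  (forall i j, seq_cvg (fun t => A t i j) (L i j)) ->
  seq_cvg (fun t => \det (A t)) (\det L).
Proof. by have := lim_det (@seq_cvg_ext F) (@seq_cvg_cst F) (@seq_cvgD F) (@seq_cvgM F); apply. Qed.

Section MatrixCvg.
Variable F : numFieldType.

Definition mx_cvg p q (A : nat -> 'M[F]_(p, q)) (L : 'M[F]_(p, q)) :=
  forall i j, seq_cvg (fun t => A t i j) (L i j).

Lemma mx_cvg_ext p q (A B : nat -> 'M[F]_(p, q)) L : A =1 B -> mx_cvg A L -> mx_cvg B L.
Proof. by move=> AB h i j; apply: seq_cvg_ext (h i j) => t; rewrite AB. Qed.

Lemma mx_cvg_cst p q (L : 'M[F]_(p, q)) : mx_cvg (fun=> L) L.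
Proof. by move=> i j; apply: seq_cvg_cst. Qed.

Lemma mx_cvgD p q (A B : nat -> 'M[F]_(p, q)) L M :
  mx_cvg A L -> mx_cvg B M -> mx_cvg (fun t => A t + B t) (L + M).
Proof.
move=> hA hB i j; rewrite mxE.
by apply: seq_cvg_ext (seq_cvgD (hA i j) (hB i j)) => t; rewrite mxE.
Qed.

Lemma mx_cvgZ p q (a : nat -> F) (A : nat -> 'M[F]_(p, q)) l L :
  seq_cvg a l -> mx_cvg A L -> mx_cvg (fun t => a t *: A t) (l *: L).
Proof.
move=> ha hA i j; rewrite mxE.
by apply: seq_cvg_ext (seq_cvgM ha (hA i j)) => t; rewrite mxE.
Qed.

Lemma mx_cvg_sum p q (I : Type) (r : seq I) (P : pred I)
    (A : I -> nat -> 'M[F]_(p, q)) (L : I -> 'M[F]_(p, q)) :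
  (forall i, P i -> mx_cvg (A i) (L i)) ->
  mx_cvg (fun t => \sum_(i <- r | P i) A i t) (\sum_(i <- r | P i) L i).
Proof.
by have := lim_sum (@mx_cvg_ext p q) (@mx_cvg_cst p q) (@mx_cvgD p q); apply.
Qed.

Lemma mx_cvg_mulmx p q r (A : nat -> 'M[F]_(p, q)) (B : nat -> 'M[F]_(q, r)) L M :
  mx_cvg A L -> mx_cvg B M -> mx_cvg (fun t => A t *m B t) (L *m M).
Proof.
move=> hA hB i j; rewrite mxE; apply: seq_cvg_ext; last first.
  by apply: seq_cvg_sum => k _; apply: seq_cvgM (hA i k) (hB k j).
by move=> t; rewrite mxE.
Qed.

Lemma mx_cvg_uniq p q (A : nat -> 'M[F]_(p, q)) L M :
  mx_cvg A L -> mx_cvg A M -> L = M.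
Proof. by move=> hL hM; apply/matrixP => i j; apply: seq_cvg_uniq (hL i j) (hM i j). Qed.

Lemma mx_cvg_row p q (A : nat -> 'M[F]_(p, q)) L i :
  mx_cvg A L -> mx_cvg (fun t => row i (A t)) (row i L).
Proof. by move=> h i' j; rewrite mxE; apply: seq_cvg_ext (h i j) => t; rewrite mxE. Qed.

Lemma mx_cvg_col p q (A : nat -> 'M[F]_(p, q)) L j :
  mx_cvg A L -> mx_cvg (fun t => col j (A t)) (col j L).
Proof. by move=> h i j'; rewrite mxE; apply: seq_cvg_ext (h i j) => t; rewrite mxE. Qed.

Lemma mx_cvg_subseq (phi : nat -> nat) p q (A : nat -> 'M[F]_(p, q)) L :
  {homo phi : i j / (i < j)%N} -> mx_cvg A L -> mx_cvg (fun t => A (phi t)) L.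
Proof. by move=> inc h i j; apply: seq_cvg_subseq inc (h i j). Qed.

Lemma tensor_cvg_slices n K (S : nat -> 'I_K -> 'M[F]_n) T :
  tensor_cvg S T -> forall k, mx_cvg (fun t => S t k) (T k).
Proof. by move=> h k i j e /h[N hN]; exists N => t /hN. Qed.

End MatrixCvg.

Definition bolzano_weierstrass (F : numFieldType) :=
  forall u : nat -> F, (forall t, `|u t| <= 1) ->
  exists2 phi : nat -> nat, {homo phi : i j / (i < j)%N} &
    exists l, seq_cvg (fun t => u (phi t)) l.

Local Notation RR := Rdefinitions.R.

Lemma bolzano_weierstrass_R : bolzano_weierstrass RR.
Proof.
move=> u u_le1.
have [l adh_l] : exists l, ValAdh u l.
  apply: (Bolzano_Weierstrass u _ (compact_P3 (-1) 1)) => t.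
  by have := u_le1 t; rewrite ler_norml => /andP[? ?]; split; apply/RleP.
have near_l (Nk : nat * nat) : exists p, (Nk.1 <= p)%N /\ `|u p - l| < (Nk.2.+1%:R)^-1.
  have k_gt0 : 0 < (Nk.2.+1%:R : RR)^-1 by rewrite invr_gt0 ltr0n.
  pose r := RIneq.mkposreal _ (elimT RltP k_gt0).
  have [p [/ssrnat.leP Np /RltP up]] := adh_l (disc l r) Nk.1 (ex_intro _ r (fun _ h => h)).
  by exists p.
have [g hg] := choice near_l.
(* the t-th index lies beyond the previous one and within 1/(t+1) of l *)
pose phi := fix phi t := if t is t'.+1 then g ((phi t').+1, t) else g (0%N, 0%N).
have phi_near t : `|u (phi t) - l| < (t.+1%:R)^-1.
  by case: t => [|t] /=; [case: (hg (0, 0)%N) | case: (hg ((phi t).+1, t.+1))].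
exists phi.
  apply: homo_ltn => [y x z|t]; first exact: ltn_trans.
  by rewrite /=; case: (hg ((phi t).+1, t.+1)).
exists l => e e0; have e'_gt0 : 0 <= e^-1 by rewrite invr_ge0 ltW.
exists (Num.Def.archi_bound e^-1) => t ht; apply: lt_trans (phi_near t) _.
rewrite -[e]invrK ltf_pV2 ?posrE ?invr_gt0 ?ltr0n //.
by apply: lt_le_trans (archi_boundP e'_gt0) _; rewrite ler_nat leqW.
Qed.

Local Notation CC := (complex RR).

Lemma bolzano_weierstrass_C : bolzano_weierstrass CC.
Proof.
move=> u u_le1.
have Re_le1 t : `|complex.Re (u t)| <= 1.
  by rewrite -lecR; apply: le_trans (normc_ge_Re _) (u_le1 t).
have Im_le1 t : `|complex.Im (u t)| <= 1.
  have := normc_ge_Re (u t * 'i%C); rewrite ReiNIm normrN -lecR => /le_trans; apply.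
  rewrite normrM; apply: le_trans (u_le1 t).
  suff -> : `|'i%C : CC| = 1 by rewrite mulr1.
  by rewrite normc_def /= expr0n /= add0r expr1n sqrtr1.
have [phi1 inc1 [a ha]] := bolzano_weierstrass_R Re_le1.
have [phi2 inc2 [b hb]] := bolzano_weierstrass_R (fun t => Im_le1 (phi1 t)).
exists (fun t => phi1 (phi2 t)); first by move=> i j /inc2 /inc1.
exists (a +i* b)%C => e e0.
move: (e0); rewrite ltcE /= => /andP[/eqP Im_e Re_e].
have e2 : 0 < complex.Re e / 2 by rewrite divr_gt0.
have [N1 h1] := seq_cvg_subseq inc2 ha e2; have [N2 h2] := hb _ e2.
exists (maxn N1 N2) => t; rewrite geq_max => /andP[/h1 ra /h2 rb].
have -> : e = (complex.Re e)%:C%C by rewrite [LHS]complexE Im_e mulr0 addr0.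
rewrite normc_def !raddfB /= ltcR.
have sq_le (x y : RR) : x ^+ 2 + y ^+ 2 <= (`|x| + `|y|) ^+ 2.
  rewrite -[x ^+ 2]real_normK ?num_real // -[y ^+ 2]real_normK ?num_real //.
  by have := normr_ge0 x; have := normr_ge0 y; nra.
apply: le_lt_trans (ler_wsqrtr (sq_le _ _)) _.
by rewrite sqrtr_sqr ger0_norm ?addr_ge0 // [complex.Re e]splitr ltrD.
Qed.

Lemma bolzano_weierstrass_KR b : bolzano_weierstrass (KR b).
Proof. by case: b; [exact: bolzano_weierstrass_R | exact: bolzano_weierstrass_C]. Qed.

Section BolzanoWeierstrassMx.
Variable F : numFieldType.
Hypothesis bwF : bolzano_weierstrass F.

Lemma bolzano_weierstrass_fin (I : finType) (u : nat -> I -> F) :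
  (forall t i, `|u t i| <= 1) ->
  exists2 phi : nat -> nat, {homo phi : i j / (i < j)%N} &
    exists l : I -> F, forall i, seq_cvg (fun t => u (phi t) i) (l i).
Proof.
move=> u_le1.
suff [phi inc [l hl]] : exists2 phi : nat -> nat, {homo phi : i j / (i < j)%N} &
    exists l : I -> F, forall i, i \in enum I -> seq_cvg (fun t => u (phi t) i) (l i).
  by exists phi => //; exists l => i; apply: hl; rewrite mem_enum.
elim: (enum I) => [|i s [phi1 inc1 [l1 hl1]]].
  by exists id => //; exists (fun=> 0).
have [phi2 inc2 [c hc]] := bwF (fun t => u_le1 (phi1 t) i).
exists (fun t => phi1 (phi2 t)); first by move=> ? ? /inc2 /inc1.
exists (fun j => if j == i then c else l1 j) => j; rewrite inE.
case: eqP => [-> _ //|_ /= js]; exact: seq_cvg_subseq inc2 (hl1 j js).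
Qed.

Lemma bolzano_weierstrass_mx p q (A : nat -> 'M[F]_(p, q)) :
  (forall t i j, `|A t i j| <= 1) ->
  exists2 phi : nat -> nat, {homo phi : i j / (i < j)%N} &
    exists L, mx_cvg (fun t => A (phi t)) L.
Proof.
move=> A_le1; have [|phi inc [l hl]] := @bolzano_weierstrass_fin _ (fun t ij => A t ij.1 ij.2).
  by move=> t [i j]; apply: A_le1.
by exists phi => //; exists (\matrix_(i, j) l (i, j)) => i j; rewrite mxE; apply: hl (i, j).
Qed.

Lemma bolzano_weierstrass_mx2 p q p' q' (A : nat -> 'M[F]_(p, q)) (B : nat -> 'M[F]_(p', q')) :
  (forall t i j, `|A t i j| <= 1) -> (forall t i j, `|B t i j| <= 1) ->
  exists2 phi : nat -> nat, {homo phi : i j / (i < j)%N} &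
    exists L M, mx_cvg (fun t => A (phi t)) L /\ mx_cvg (fun t => B (phi t)) M.
Proof.
move=> A_le1 B_le1; have [phi1 inc1 [L hL]] := bolzano_weierstrass_mx A_le1.
have [phi2 inc2 [M hM]] := bolzano_weierstrass_mx (fun t => B_le1 (phi1 t)).
exists (fun t => phi1 (phi2 t)); first by move=> i j /inc2/inc1.
by exists L, M; split => //; apply: mx_cvg_subseq inc2 hL.
Qed.

End BolzanoWeierstrassMx.

Section Normalization.
Variable F : numFieldType.

Definition normalized p q (A : 'M[F]_(p, q)) :=
  (forall i j, `|A i j| <= 1) /\ exists i j, A i j = 1.

Lemma exists_max_norm (I : finType) (f : I -> F) (i0 : I) :
  exists i, forall j, `|f j| <= `|f i|.
Proof.
suff [i hi] : exists i, forall j, j \in enum I -> `|f j| <= `|f i|.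
  by exists i => j; apply: hi; rewrite mem_enum.
elim: (enum I) => [|a s [i hi]]; first by exists i0.
have [ai|ia] := boolP (`|f a| <= `|f i|).
  by exists i => j; rewrite inE => /orP[/eqP -> //|]; apply: hi.
have le_ia : `|f i| <= `|f a|.
  by have := ger_leVge (normr_ge0 (f a)) (normr_ge0 (f i)); rewrite (negbTE ia).
by exists a => j; rewrite inE => /orP[/eqP -> //|/hi/le_trans]; apply.
Qed.

Lemma normalizable p q (A : 'M[F]_(p, q)) : A != 0 ->
  exists a, a != 0 /\ normalized (a *: A).
Proof.
move=> /matrix0Pn[i0 [j0 A0]].
have [[i j] hij] := exists_max_norm (fun ij => A ij.1 ij.2) (i0, j0).
have Aij : A i j != 0.
  by apply: contraNneq A0 => Aij0; have := hij (i0, j0); rewrite /= Aij0 normr0 normr_le0.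
exists (A i j)^-1; split; first by rewrite invr_neq0.
split=> [i' j'|]; last by exists i, j; rewrite mxE mulVf.
rewrite mxE normrM normrV ?unitfE // mulrC ler_pdivrMr ?normr_gt0 // mul1r.
exact: (hij (i', j')).
Qed.

Lemma normalized_rows_le1 p q (A : 'M[F]_(p, q)) :
  (forall i, normalized (row i A)) -> forall i j, `|A i j| <= 1.
Proof. by move=> nA i j; have := (nA i).1 0 j; rewrite mxE. Qed.

Lemma normalized_cols_le1 p q (A : 'M[F]_(p, q)) :
  (forall j, normalized (col j A)) -> forall i j, `|A i j| <= 1.
Proof. by move=> nA i j; have := (nA j).1 i 0; rewrite mxE. Qed.

Lemma normalized_limit_neq0 p q (A : nat -> 'M[F]_(p, q)) L :
  (forall t, normalized (A t)) -> mx_cvg A L -> L != 0.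
Proof.
move=> nA hA; apply/eqP => L0.
have [N hN] := eventually_forall_fin
  (fun ij : 'I_p * 'I_q => hA ij.1 ij.2 _ ltr01).
have [_ [i [j Aij]]] := nA N.
by have := hN (i, j) N (leqnn N); rewrite /= Aij L0 mxE subr0 normr1 ltxx.
Qed.

End Normalization.

Section PolyCvg.
Variables (F : numFieldType) (K : nat).
Implicit Types (P Q : nat -> {mpoly F[K]}) (p q : {mpoly F[K]}).

Definition mcvg P p := forall m, seq_cvg (fun t => (P t)@_m) p@_m.

Lemma mcvg_ext P Q p : P =1 Q -> mcvg P p -> mcvg Q p.
Proof. by move=> PQ h m; apply: seq_cvg_ext (h m) => t; rewrite PQ. Qed.

Lemma mcvg_cst p : mcvg (fun=> p) p.
Proof. by move=> m; apply: seq_cvg_cst. Qed.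

Lemma mcvgD P Q p q : mcvg P p -> mcvg Q q -> mcvg (fun t => P t + Q t) (p + q).
Proof.
move=> hP hQ m; rewrite mcoeffD.
by apply: seq_cvg_ext (seq_cvgD (hP m) (hQ m)) => t; rewrite mcoeffD.
Qed.

Lemma mcvgM P Q p q : mcvg P p -> mcvg Q q -> mcvg (fun t => P t * Q t) (p * q).
Proof.
move=> hP hQ m; rewrite mcoeffM; apply: seq_cvg_ext; last first.
  by apply: seq_cvg_sum => k _; apply: seq_cvgM; [apply: hP | apply: hQ].
by move=> t; rewrite mcoeffM.
Qed.

Lemma mcvgC (u : nat -> F) c : seq_cvg u c -> mcvg (fun t => (u t)%:MP) c%:MP.
Proof.
move=> h m; rewrite mcoeffC.
by apply: seq_cvg_ext (seq_cvgM h (seq_cvg_cst _)) => t; rewrite mcoeffC.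
Qed.

Lemma mcvg_sum (I : Type) (r : seq I) (Pr : pred I)
    (P : I -> nat -> {mpoly F[K]}) (p : I -> {mpoly F[K]}) :
  (forall i, Pr i -> mcvg (P i) (p i)) ->
  mcvg (fun t => \sum_(i <- r | Pr i) P i t) (\sum_(i <- r | Pr i) p i).
Proof. by have := lim_sum mcvg_ext mcvg_cst mcvgD; apply. Qed.

Lemma mcvg_prod (I : Type) (r : seq I) (Pr : pred I)
    (P : I -> nat -> {mpoly F[K]}) (p : I -> {mpoly F[K]}) :
  (forall i, Pr i -> mcvg (P i) (p i)) ->
  mcvg (fun t => \prod_(i <- r | Pr i) P i t) (\prod_(i <- r | Pr i) p i).
Proof. by have := lim_prod mcvg_ext mcvg_cst mcvgM; apply. Qed.

Lemma mcvg_det n (A : nat -> 'M[{mpoly F[K]}]_n) (L : 'M[{mpoly F[K]}]_n) :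
  (forall i j, mcvg (fun t => A t i j) (L i j)) -> mcvg (fun t => \det (A t)) (\det L).
Proof. by have := lim_det mcvg_ext mcvg_cst mcvgD mcvgM; apply. Qed.

Lemma mcvg_scale P Q p q (kap : nat -> F) :
  (forall t, P t = (kap t)%:MP * Q t) -> mcvg P p -> mcvg Q q -> q != 0 ->
  exists kapl, p = kapl%:MP * q.
Proof.
move=> hPQ hP hQ q0.
have [m qm] : exists m, q@_m != 0.
  move: q0; rewrite -msupp_eq0; case E: (msupp q) => [|m s] // _.
  by exists m; rewrite -mcoeff_msupp E mem_head.
have cross m' : p@_m' * q@_m = p@_m * q@_m'.
  apply: seq_cvg_uniq (seq_cvgM (hP m') (hQ m)) _.
  apply: seq_cvg_ext (seq_cvgM (hP m) (hQ m')) => t.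
  by rewrite !hPQ !mcoeffCM mulrAC.
exists (p@_m / q@_m); apply/mpolyP => m'; rewrite mcoeffCM.
by apply: (mulIf qm); rewrite cross mulrAC divfK.
Qed.

Lemma mcvg_lform (c : nat -> 'rV[F]_K) cl :
  mx_cvg c cl -> mcvg (fun t => lform (c t)) (lform cl).
Proof.
move=> hc; apply: mcvg_sum => k _; apply: mcvgM; last exact: mcvg_cst.
exact: mcvgC (hc 0 k).
Qed.

End PolyCvg.

Section LinearForms.
Variables (F : numFieldType) (K : nat).
Implicit Types lam : 'rV[F]_K.

Lemma lform0 : lform (0 : 'rV[F]_K) = 0.
Proof. by rewrite /lform big1 // => k _; rewrite mxE mpolyC0 mul0r. Qed.

Lemma lformZ (a : F) lam : lform (a *: lam) = a%:MP * lform lam.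
Proof.
rewrite /lform big_distrr; apply: eq_bigr => k _.
by rewrite mxE rmorphM /= mulrA.
Qed.

Lemma mcoeff_lform lam k : (lform lam)@_(mnm1 k) = lam 0 k.
Proof.
rewrite /lform raddf_sum (bigD1 k) //= big1 ?addr0.
  by rewrite mcoeffCM mcoeffXU eqxx mulr1.
by move=> j /negbTE jk; rewrite mcoeffCM mcoeffXU jk mulr0.
Qed.

Lemma msize_lform lam : lam != 0 -> (1 < msize (lform lam))%N.
Proof.
move=> /rV0Pn[k lam_k]; rewrite -(mdeg1 k) msize_mdeg_lt //.
by rewrite -[_ \in _]negbK -mcoeff_eq0 mcoeff_lform.
Qed.

Lemma lform_neq0 lam : lam != 0 -> lform lam != 0.
Proof. by move/msize_lform; apply: contraTneq => ->; rewrite msize0. Qed.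

Lemma msize_lform_expn lam d : lam != 0 -> (d < msize (lform lam ^+ d))%N.
Proof.
move=> lam0; elim: d => [|d ih]; first by rewrite expr0 msize1.
rewrite exprSr msizeM ?expf_neq0 ?lform_neq0 //.
have := msize_lform lam0; move: ih; set a := msize _; set b := msize _; lia.
Qed.

End LinearForms.

Lemma mul_pid_mxE (R : pzSemiRingType) m n (A : 'M[R]_(m, n)) d i j :
  (A *m pid_mx d) i j = A i j * (j < d)%:R.
Proof.
rewrite mxE (bigD1 j) //= big1 ?addr0; first by rewrite mxE eqxx.
by move=> k; rewrite mxE -val_eqE /= => /negbTE ->; rewrite mulr0.
Qed.

Lemma unitmx_col_neq0 (R : fieldType) n (A : 'M[R]_n) j : A \in unitmx -> col j A != 0.
Proof.
move=> A_unit; apply/eqP => /(congr1 (mulmx (invmx A))).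
rewrite colE mulKmx // mulmx0 => /matrixP/(_ j 0)/eqP.
by rewrite !mxE !eqxx oner_eq0.
Qed.

Lemma det_dvd_cols (R : comPzRingType) n (N Z : 'M[R]_n) (a : R) d :
  (d <= n)%N -> (forall i (j : 'I_n), (j < d)%N -> N i j = a * Z i j) ->
  exists c, \det N = a ^+ d * c.
Proof.
move=> dn hN.
pose D := diag_mx (\row_(j < n) if (j < d)%N then a else 1).
pose N' := \matrix_(i, j) if (j < d)%N then Z i j else N i j.
have -> : N = N' *m D.
  apply/matrixP => i j; rewrite mul_mx_diag !mxE.
  by case: ifP => jd; [rewrite hN // mulrC | rewrite mulr1].
exists (\det N'); rewrite det_mulmx det_diag mulrC; congr (_ * _).
rewrite -[in RHS](card_ord d) -prodr_const (big_ord_widen _ (fun=> a) dn).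
by rewrite [in RHS]big_mkcond; apply: eq_bigr => j _; rewrite mxE.
Qed.

Section SlicePencil.
Variables (F : numFieldType) (n K : nat).
Implicit Types (T : 'I_K -> 'M[F]_n) (lam : 'rV[F]_K).

Definition slice_pencil T : 'M[{mpoly F[K]}]_n :=
  \matrix_(i, j) \sum_k 'X_k * (T k i j)%:MP.

Lemma pTE T : pT T = \det (slice_pencil T). Proof. by []. Qed.

Lemma meval_slice_pencil T (g : 'I_K -> F) :
  map_mx (meval g) (slice_pencil T) = \sum_k g k *: T k.
Proof.
apply/matrixP => i j; rewrite !mxE summxE rmorph_sum; apply: eq_bigr => k _.
by rewrite rmorphM /= mevalXU mevalC !mxE.
Qed.

Lemma pT_neq0 T : slice_mix_invertible T -> pT T != 0.
Proof.
move=> [g]; rewrite unitmxE unitfE -meval_slice_pencil det_map_mx -pTE.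
by apply: contraNneq => ->; rewrite raddf0.
Qed.

Lemma slice_pencil_mulmx T p (V Z : 'M[F]_(n, p)) lam :
  (forall l, T l *m V = lam 0 l *: Z) ->
  slice_pencil T *m map_mx (@mpolyC K F) V = lform lam *: map_mx (@mpolyC K F) Z.
Proof.
move=> hV; apply/matrixP => i j; rewrite !mxE.
under eq_bigr => r _ do rewrite !mxE big_distrl.
rewrite exchange_big /lform big_distrl; apply: eq_bigr => l _ /=.
under eq_bigr do rewrite -mulrA -rmorphM.
rewrite -big_distrr -rmorph_sum [_ * 'X_l]mulrC -mulrA -rmorphM /=.
have := congr1 (fun M : 'M[F]_(n, p) => M i j) (hV l); rewrite !mxE => <-.
by congr (_ * _%:MP); apply: eq_bigr => r _; rewrite mxE.
Qed.

Lemma lform_expn_dvd_pT T d (X Y : 'M[F]_(n, d)) lam :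
  \rank X = d -> (forall l, T l *m X = lam 0 l *: Y) ->
  exists q, pT T = lform lam ^+ d * q.
Proof.
move=> rX hXY; have dn : (d <= n)%N by rewrite -rX rank_leq_row.
set L := col_ebase X; set U := row_ebase X.
have eX : L *m pid_mx d *m U = X by have := mulmx_ebase X; rewrite rX.
pose W : 'M[F]_(d, n) := invmx U *m pid_mx d.
(* the first d columns of the invertible matrix L span the column space of X *)
have eLW : L *m (pid_mx d : 'M[F]_n) = X *m W.
  by rewrite /W mulmxA -eX mulmxK ?row_ebase_unit // -mulmxA mul_pid_mx !minnn.
have hL l : T l *m (L *m pid_mx d) = lam 0 l *: (Y *m W).
  by rewrite eLW mulmxA hXY scalemxAl.
pose N := slice_pencil T *m map_mx (@mpolyC K F) L.
have [c hc] : exists c, \det N = lform lam ^+ d * c.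
  apply: (det_dvd_cols (Z := map_mx (@mpolyC K F) (Y *m W))) dn _ => i j jd.
  have := congr1 (fun M : 'M[{mpoly F[K]}]_n => M i j) (slice_pencil_mulmx hL).
  by rewrite map_mxM mulmxA map_pid_mx mul_pid_mxE jd mulr1 /N => ->; rewrite mxE.
exists (c * ((\det L)^-1)%:MP).
have L_unit : \det L != 0 by rewrite -unitfE -unitmxE col_ebase_unit.
move: hc; rewrite /N det_mulmx det_map_mx -pTE => /(congr1 ( *%R^~ ((\det L)^-1)%:MP)).
by rewrite -!mulrA -rmorphM divff // rmorph1 mulr1.
Qed.
End SlicePencil.

Section Multiplicities.
Variables (F : numFieldType) (n K : nat).
Implicit Types (T : 'I_K -> 'M[F]_n) (lam : 'rV[F]_K).

Lemma jge_pair_mulmx T lam x : jge_pair T lam x ->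
  x != 0 /\ exists y, forall l, T l *m x = lam 0 l *: y.
Proof.
move=> [mu [/andP[/sub_rVP[a ->] _] [x0 [y [_ hy]]]]]; split => //.
by exists (a *: y) => l; rewrite hy mxE scalerA mulrC.
Qed.

Lemma jge_pair_cols T lam d (X : 'M[F]_(n, d)) :
  (forall j, jge_pair T lam (col j X)) ->
  exists Y : 'M[F]_(n, d), forall l, T l *m X = lam 0 l *: Y.
Proof.
move=> hX; have /choice[y hy] j := (jge_pair_mulmx (hX j)).2.
exists (\matrix_(i, j) y j i 0) => l; apply/matrixP => i j.
have := congr1 (fun v : 'cV[F]_n => v i 0) (hy j l); rewrite !mxE => <-.
by apply: eq_bigr => r _; rewrite !mxE.
Qed.

Lemma leq_am T lam d q : pT T != 0 -> lam != 0 -> pT T = lform lam ^+ d * q ->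
  (d <= am T lam)%N.
Proof.
move=> pT0 lam0 hq.
have q0 : q != 0 by apply: contraNneq pT0 => q0; rewrite hq q0 mulr0.
have d_lt : (d < (msize (pT T)).+1)%N.
  rewrite ltnS hq msizeM ?expf_neq0 ?lform_neq0 //.
  have := msize_lform_expn d lam0; have : msize q != 0%N by rewrite mmeasure_poly_eq0.
  set a := msize _; set b := msize _; lia.
apply: (@leq_bigmax_cond _ _ (fun m : 'I_(msize (pT T)).+1 => val m) (Ordinal d_lt)).
by apply/asboolP; exists q.
Qed.

Lemma gm_le_am T lam : slice_mix_invertible T -> lam != 0 -> (gm T lam <= am T lam)%N.
Proof.
move=> hT lam0; apply/bigmax_leqP => d /asboolP[X [rX hX]].
have [Y hY] := jge_pair_cols hX.
have [q hq] := lform_expn_dvd_pT rX hY.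
exact: leq_am (pT_neq0 hT) lam0 hq.
Qed.

Lemma jge_pair_dvd_pT T lam x : slice_mix_invertible T -> jge_pair T lam x ->
  exists g, g != 0 /\ pT T = lform lam * g.
Proof.
move=> hT /jge_pair_mulmx[x0 [y hy]].
have rx : \rank x = 1%N by apply/eqP; rewrite eqn_leq rank_leq_col lt0n mxrank_eq0.
have [g hg] := lform_expn_dvd_pT rx hy; rewrite expr1 in hg.
by exists g; split => //; apply: contraNneq (pT_neq0 hT) => g0; rewrite hg g0 mulr0.
Qed.

End Multiplicities.

Section PencilFactor.
Variables (F : numFieldType) (n K : nat).
Implicit Types (T : 'I_K -> 'M[F]_n).
Local Notation mpC := (@mpolyC K F).

Lemma slice_pencilE T : slice_pencil T = \sum_k 'X_k *: map_mx mpC (T k).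
Proof. by apply/matrixP => i j; rewrite !mxE summxE; apply: eq_bigr => k _; rewrite !mxE. Qed.

Lemma eq_pT T T' : T =1 T' -> pT T = pT T'.
Proof.
move=> eT; rewrite !pTE; congr (\det _); apply/matrixP => i j; rewrite !mxE.
by apply: eq_bigr => k _; rewrite eT.
Qed.

Lemma slice_pencil_mul2mx T (A B : 'M[F]_n) :
  slice_pencil (fun k => A *m T k *m B) =
  map_mx mpC A *m slice_pencil T *m map_mx mpC B.
Proof.
rewrite !slice_pencilE mulmx_sumr mulmx_suml; apply: eq_bigr => k _.
by rewrite !map_mxM -scalemxAr -scalemxAl.
Qed.

Lemma slice_pencil_diag (C : 'M[F]_(n, K)) :
  slice_pencil (fun k => diag_mx (\row_s C s k)) = diag_mx (\row_s lform (row s C)).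
Proof.
rewrite slice_pencilE.
under eq_bigr do rewrite map_diag_mx -linearZ.
rewrite -linear_sum; congr diag_mx; apply/rowP => s; rewrite !mxE summxE.
by apply: eq_bigr => k _; rewrite !mxE mulrC.
Qed.

Lemma pT_diag_factor T (A B : 'M[F]_n) (C : 'M[F]_(n, K)) :
  (forall k, T k = A *m diag_mx (\row_s C s k) *m B) ->
  pT T = (\det A * \det B)%:MP * \prod_s lform (row s C).
Proof.
move=> hT; rewrite (eq_pT hT) pTE slice_pencil_mul2mx slice_pencil_diag.
by rewrite !det_mulmx !det_map_mx det_diag mulrAC rmorphM; congr (_ * _);
  apply: eq_bigr => s _; rewrite mxE.
Qed.

Lemma rank_le_factor T r : rank_le T r ->
  exists (A : 'M[F]_(n, r)) (C : 'M[F]_(r, K)) (B : 'M[F]_(r, n)),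
    forall k, T k = A *m diag_mx (\row_s C s k) *m B.
Proof.
move=> [a [b [c hT]]].
exists (\matrix_(i, s) a s i), (\matrix_(s, k) c s k), (\matrix_(s, j) b s j) => k.
apply/matrixP => i j; rewrite hT mxE; apply: eq_bigr => s _.
by rewrite mul_mx_diag !mxE mulrAC.
Qed.

(* The JGE equations with the common image vector eliminated; unlike [jge_rel]
   they are preserved under limits. *)
Definition jge_eqn T (c : 'rV[F]_K) (x : 'cV[F]_n) :=
  forall k l, c 0 l *: (T k *m x) = c 0 k *: (T l *m x).

Lemma jge_eqn_mulmx T (c : 'rV[F]_K) x (y : 'cV[F]_n) :
  (forall k, T k *m x = c 0 k *: y) -> jge_eqn T c x.
Proof. by move=> h k l; rewrite !h !scalerA mulrC. Qed.

Lemma jge_eqnZ T (c : 'rV[F]_K) x a b : jge_eqn T c x -> jge_eqn T (a *: c) (b *: x).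
Proof.
move=> h k l; rewrite !mxE -!scalemxAr !scalerA mulrAC [_ * b]mulrAC.
by rewrite -!(scalerA (a * b)) h.
Qed.

Lemma jge_eqn_rel T (c : 'rV[F]_K) x : slice_mix_invertible T -> c != 0 -> x != 0 ->
  jge_eqn T c x -> jge_rel T c x.
Proof.
move=> [g g_unit] /rV0Pn[l0 c_l0] x0 hcx; split => //.
pose y := (c 0 l0)^-1 *: (T l0 *m x).
have hy l : T l *m x = c 0 l *: y.
  by apply: (scalerI c_l0); rewrite hcx /y !scalerA [c 0 l0 * _]mulrC mulfK.
exists y; split => //; apply: contraNneq x0 => y0.
have : (\sum_k g k *: T k) *m x = 0.
  by rewrite mulmx_suml big1 // => k _; rewrite -scalemxAl hy y0 !scaler0.
move/(congr1 (mulmx (invmx (\sum_k g k *: T k)))).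
by rewrite mulmxA mulVmx // mul1mx mulmx0 => ->.
Qed.

Definition jge_factorization T (kap : F) (C : 'M[F]_(n, K)) (X : 'M[F]_n) :=
  [/\ forall s, row s C != 0, forall s, col s X != 0,
      pT T = kap%:MP * \prod_s lform (row s C) &
      forall s, jge_eqn T (row s C) (col s X)].

Lemma rank_le_jge_factorization T : rank_le T n -> slice_mix_invertible T ->
  exists kap C X, jge_factorization T kap C X.
Proof.
move=> /rank_le_factor[A [C [B hT]]] /pT_neq0; have hP := pT_diag_factor hT.
rewrite hP mulf_eq0 negb_or mpolyC_eq0 mulf_eq0 negb_or => /andP[/andP[_ dB] /prodf_neq0 lC].
have B_unit : B \in unitmx by rewrite unitmxE unitfE.
exists (\det A * \det B), C, (invmx B); split => // [s|s|s].
- by apply: contraNneq (lC s isT) => ->; rewrite lform0.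
- by apply: unitmx_col_neq0; rewrite unitmx_inv.
- apply: (@jge_eqn_mulmx _ _ _ (col s A)) => k; rewrite colE mulmxA hT mulmxK //.
  by apply/colP => i; rewrite -colE [LHS]mxE mul_mx_diag !mxE mulrC.
Qed.

Lemma normalize_jge_factorization T kap C X : jge_factorization T kap C X ->
  exists kap' C' X', [/\ jge_factorization T kap' C' X',
    forall s, normalized (row s C') & forall s, normalized (col s X')].
Proof.
move=> [rC cX hP hE].
have /choice[a ha] : forall s, exists a, a != 0 /\ normalized (a *: row s C).
  by move=> s; apply: normalizable.
have /choice[b hb] : forall s, exists b, b != 0 /\ normalized (b *: col s X).
  by move=> s; apply: normalizable.
pose C' := \matrix_(s, k) (a s * C s k).
pose X' := \matrix_(i, s) (b s * X i s).
have rowC' s : row s C' = a s *: row s C by apply/rowP => k; rewrite !mxE.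
have colX' s : col s X' = b s *: col s X by apply/colP => i; rewrite !mxE.
have a0 : \prod_s a s != 0 by apply/prodf_neq0 => s _; case: (ha s).
exists (kap / \prod_s a s), C', X'; split=> [|s|s]; rewrite ?rowC' ?colX'.
- split=> [s|s||s]; rewrite ?rowC' ?colX'.
  + by rewrite scaler_eq0 negb_or (rC s) andbT; case: (ha s).
  + by rewrite scaler_eq0 negb_or (cX s) andbT; case: (hb s).
  + have -> : \prod_s lform (row s C') = (\prod_s a s)%:MP * \prod_s lform (row s C).
      by rewrite rmorph_prod -big_split; apply: eq_bigr => s _; rewrite rowC' lformZ.
    by rewrite hP mulrA -rmorphM divfK.
  + exact: jge_eqnZ.
- by case: (ha s).
- by case: (hb s).
Qed.

End PencilFactor.

Section BorderRank.
Variables (F : numFieldType) (n K : nat).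
Implicit Types (T : 'I_K -> 'M[F]_n) (S : nat -> 'I_K -> 'M[F]_n).

Lemma mcvg_pT S T : (forall k, mx_cvg (fun t => S t k) (T k)) ->
  mcvg (fun t => pT (S t)) (pT T).
Proof.
move=> hS; apply: mcvg_det => i j; rewrite mxE.
apply: mcvg_ext; last first.
  apply: mcvg_sum => k _; apply: mcvgM; first exact: mcvg_cst.
  exact: mcvgC (hS k i j).
by move=> t; rewrite mxE.
Qed.

Lemma jge_eqn_limit S T (c : nat -> 'rV[F]_K) (x : nat -> 'cV[F]_n) cl xl :
  (forall k, mx_cvg (fun t => S t k) (T k)) -> mx_cvg c cl -> mx_cvg x xl ->
  (forall t, jge_eqn (S t) (c t) (x t)) -> jge_eqn T cl xl.
Proof.
move=> hS hc hx hE k l.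
have side k' l' : mx_cvg (fun t => c t 0 l' *: (S t k' *m x t)) (cl 0 l' *: (T k' *m xl)).
  exact: mx_cvgZ (hc 0 l') (mx_cvg_mulmx (hS k') hx).
by apply: mx_cvg_uniq (side k l) _; apply: mx_cvg_ext (side l k) => t; rewrite hE.
Qed.

Lemma jge_factorization_limit S T (kap : nat -> F) C X Cl Xl :
  (forall t, jge_factorization (S t) (kap t) (C t) (X t)) ->
  (forall t s, normalized (row s (C t))) -> (forall t s, normalized (col s (X t))) ->
  (forall k, mx_cvg (fun t => S t k) (T k)) -> mx_cvg C Cl -> mx_cvg X Xl ->
  exists kapl, jge_factorization T kapl Cl Xl.
Proof.
move=> hF nC nX hS hC hX.
have rCl s : row s Cl != 0 by apply: normalized_limit_neq0 (nC^~ s) (mx_cvg_row s hC).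
have cXl s : col s Xl != 0 by apply: normalized_limit_neq0 (nX^~ s) (mx_cvg_col s hX).
have hQ : mcvg (fun t => \prod_s lform (row s (C t))) (\prod_s lform (row s Cl)).
  by apply: mcvg_prod => s _; apply: mcvg_lform; apply: mx_cvg_row.
have Q0 : \prod_s lform (row s Cl) != 0 by apply/prodf_neq0 => s _; apply: lform_neq0.
have hPt t : pT (S t) = (kap t)%:MP * \prod_s lform (row s (C t)) by case: (hF t).
have [kapl hP] := mcvg_scale hPt (mcvg_pT hS) hQ Q0.
exists kapl; split => // s.
apply: jge_eqn_limit hS (mx_cvg_row s hC) (mx_cvg_col s hX) _ => t.
by case: (hF t).
Qed.

Lemma slice_mix_invertible_near S T : slice_mix_invertible T ->
  (forall k, mx_cvg (fun t => S t k) (T k)) ->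
  exists N, forall t, (N <= t)%N -> slice_mix_invertible (S t).
Proof.
move=> [g]; rewrite unitmxE unitfE => g_det hS.
have mix : mx_cvg (fun t => \sum_k g k *: S t k) (\sum_k g k *: T k).
  by apply: mx_cvg_sum => k _; apply: mx_cvgZ (seq_cvg_cst _) (hS k).
have [N hN] := seq_cvg_neq0 g_det (seq_cvg_det mix).
by exists N => t /hN det0; exists g; rewrite unitmxE unitfE.
Qed.

Hypothesis bwF : bolzano_weierstrass F.

Lemma border_rank_jge_factorization T : slice_mix_invertible T -> border_rank_le T n ->
  exists kap C X, jge_factorization T kap C X.
Proof.
move=> hT [S [rS /tensor_cvg_slices hS]].
have [N0 hN0] := slice_mix_invertible_near hT hS.
have /choice[d hd] : forall t, exists d : F * 'M[F]_(n, K) * 'M[F]_n,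
    [/\ jge_factorization (S (t + N0)%N) d.1.1 d.1.2 d.2,
        forall s, normalized (row s d.1.2) & forall s, normalized (col s d.2)].
  move=> t; have [kap [C [X hF]]] := rank_le_jge_factorization (rS _) (hN0 _ (leq_addl t N0)).
  by have [kap' [C' [X' ?]]] := normalize_jge_factorization hF; exists (kap', C', X').
have [||phi inc [Cl [Xl [hC hX]]]] :=
  bolzano_weierstrass_mx2 bwF (A := fun t => (d t).1.2) (B := fun t => (d t).2).
- by move=> t; case: (hd t) => _ /normalized_rows_le1.
- by move=> t; case: (hd t) => _ _ /normalized_cols_le1.
suff [kapl ?] : exists kapl, jge_factorization T kapl Cl Xl by exists kapl, Cl, Xl.
apply: (jge_factorization_limit (S := fun t => S (phi t + N0)%N)
  (kap := fun t => (d (phi t)).1.1)) hC hX.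
- by move=> t; case: (hd (phi t)).
- by move=> t; case: (hd (phi t)).
- by move=> t; case: (hd (phi t)).
- by move=> k; apply: mx_cvg_subseq (hS k) => i j /inc; rewrite ltn_add2r.
Qed.

End BorderRank.

Section LinearFactors.
Variables (F : numFieldType) (n K : nat).
Implicit Types (T : 'I_K -> 'M[F]_n) (lam : 'rV[F]_K).

Lemma jge_valueZ T lam a : a != 0 -> jge_value T lam -> jge_value T (a *: lam).
Proof.
move=> a0 [x [mu [/eqmxP mu_lam hx]]]; exists x, mu; split => //.
by apply/eqmxP; apply: eqmx_trans mu_lam (eqmx_sym (eqmx_scale _ a0)).
Qed.

Lemma jge_factorization_value T kap C X s : slice_mix_invertible T ->
  jge_factorization T kap C X -> jge_value T (row s C).
Proof.
move=> hT [rC cX _ hE]; exists (col s X), (row s C); split; first exact/eqmxP.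
exact: jge_eqn_rel.
Qed.

End LinearFactors.

Lemma jge_factorization_linear_factors (F : numFieldType) n K (T : 'I_K -> 'M[F]_n)
    kap C X :
  slice_mix_invertible T -> jge_factorization T kap C X ->
  exists c : 'I_n -> 'rV[F]_K, pT T = \prod_i lform (c i) /\ forall i, jge_value T (c i).
Proof.
move=> hT hF; have [_ _ hP _] := hF.
case: n T C X hT hF hP => [|n'] T C X hT hF hP.
  by exists (fun=> 0); split=> [|[]//]; rewrite pTE det_mx00 big_ord0.
have kap0 : kap != 0 by apply: contraNneq (pT_neq0 hT) => kap0; rewrite hP kap0 mul0r.
exists (fun i => if i == ord0 then kap *: row i C else row i C); split.
  by rewrite hP !big_ord_recl /= lformZ -mulrA; congr (_ * (_ * _)); apply: eq_bigr.
move=> i; case: eqP => _; last exact: jge_factorization_value hF.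
exact/jge_valueZ/(jge_factorization_value _ hT hF).
Qed.

Theorem proposition3p3 (b : bool) (n K : nat) (T : 'I_K -> 'M[KR b]_n) :
  slice_mix_invertible T ->
  (forall lam : 'rV[KR b]_K, lam != 0 -> (gm T lam <= am T lam)%N) /\
  (forall (lam : 'rV[KR b]_K) (x : 'cV[KR b]_n), jge_pair T lam x ->
     exists m : nat, (0 < m)%N /\
       exists g : {mpoly (KR b)[K]}, g != 0 /\ pT T = lform lam ^+ m * g) /\
  (border_rank_eq T n ->
     exists c : 'I_n -> 'rV[KR b]_K,
       pT T = \prod_(i < n) lform (c i) /\ forall i, jge_value T (c i)).
Proof.
move=> hT; split; first by move=> lam; apply: gm_le_am hT.
split=> [lam x hx|[hb _]].
  have [g [g0 hg]] := jge_pair_dvd_pT hT hx.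
  by exists 1%N; split => //; exists g; rewrite expr1.
have [kap [C [X hF]]] := border_rank_jge_factorization (@bolzano_weierstrass_KR b) hT hb.
exact: jge_factorization_linear_factors hT hF.
Qed.
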